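(* For every $n\ge1$ and every $\sigma\in S_n$, $$\mathrm{lsg(op)}(\sigma)+\mathrm{rsg(op)}(\sigma)=\mathrm{lsg(clos)}(\sigma)+\mathrm{rsg(clos)}(\sigma).$$
   Context: A permutation $\sigma\in S_n$ is written as the word $\sigma(1)\cdots\sigma(n)$; its runs are the maximal contiguous increasing segments. A run of length $\ge2$ is proper. $\mathrm{op}(\sigma)$ is the set of first elements of proper runs, $\mathrm{clos}(\sigma)$ the set of last elements of proper runs. For $i\in\{1,\dots,n\}$, $\mathrm{lsg}(i)$ is the number of runs lying strictly to the left of $i$ (not containing $i$) that contain both an element smaller and an element greater than $i$; $\mathrm{rsg}(i)$ is the analogous number to the right. $\mathrm{lsg}(X)(\sigma)=\sum_{i\in X(\sigma)}\mathrm{lsg}(i)$, $\mathrm{rsg}(X)(\sigma)=\sum_{i\in X(\sigma)}\mathrm{rsg}(i)$ for $X\in\{\mathrm{op},\mathrm{clos}\}$. *)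

From mathcomp Require Import all_boot all_fingroup.
Set Implicit Arguments. Unset Strict Implicit. Unset Printing Implicit Defensive.

(* The one-line word sigma(1) ... sigma(n) of sigma : 'S_n, with values in {1..n}
   ('I_n = {0..n-1} is shifted by one). *)
Definition word n (s : 'S_n) : seq nat := [seq (s i).+1 | i <- enum 'I_n].

Fixpoint runs (w : seq nat) : seq (seq nat) :=
  match w with
  | [::] => [::]
  | x :: w' =>
      match runs w' with
      | (y :: r) :: rs => if x < y then (x :: y :: r) :: rs else [:: x] :: (y :: r) :: rs
      | _ => [:: [:: x]]
      end
  end.

Definition proper_runs (w : seq nat) := [seq r <- runs w | 2 <= size r].

Definition op_set (w : seq nat) : seq nat := [seq head 0 r | r <- proper_runs w].
Definition clos_set (w : seq nat) : seq nat := [seq last 0 r | r <- proper_runs w].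

Definition run_index (w : seq nat) (i : nat) : nat := find (fun r => i \in r) (runs w).

Definition straddles (i : nat) (r : seq nat) : bool :=
  has (fun x => x < i) r && has (fun x => i < x) r.

Definition lsg (w : seq nat) (i : nat) : nat :=
  count (straddles i) (take (run_index w i) (runs w)).
Definition rsg (w : seq nat) (i : nat) : nat :=
  count (straddles i) (drop (run_index w i).+1 (runs w)).

Definition sum_lsg (w : seq nat) (X : seq nat) : nat := \sum_(i <- X) lsg w i.
Definition sum_rsg (w : seq nat) (X : seq nat) : nat := \sum_(i <- X) rsg w i.

Example runs_ex : runs [:: 3; 1; 4; 5; 2; 6] = [:: [:: 3]; [:: 1; 4; 5]; [:: 2; 6]].
Proof. by vm_compute. Qed.
Example lsg_ex : lsg [:: 3; 1; 4; 5; 2; 6] 2 = 1 /\ rsg [:: 1;4;5;3;2;6] 3 = 1.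
Proof. by vm_compute. Qed.

From mathcomp Require Import all_boot all_fingroup.
From mathcomp Require Import zify.
Set Implicit Arguments. Unset Strict Implicit.

(* A proper run r straddles i exactly when head r < i < last r, so lsg i + rsg i
   counts the runs whose interval [head, last] contains i in its interior (the run
   of i does not count when i is one of its endpoints). Summing over op and over
   clos therefore counts ordered pairs (x, y) of proper runs with head y, resp.
   last y, inside x. For two disjoint intervals with distinct endpoints both counts
   agree on the unordered pair {x, y}: 0 if they are disjoint, 1 + 1 if they cross,
   and 1 if one is nested in the other. *)

Lemma runs_nonnil w : all (fun r => r != [::]) (runs w).
Proof.
elim: w => [|x w IH] //=.
by move: IH; case: (runs w) => [|[|y r] rs] //= IH; case: ifP.
Qed.

Lemma runs_flatten w : flatten (runs w) = w.
Proof.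
elim: w => [|x w IH] //=; have := runs_nonnil w.
move: IH; case: (runs w) => [|[|y r] rs] //= <- _; first by [].
by case: ifP.
Qed.

Lemma runs_sorted w : all (sorted ltn) (runs w).
Proof.
elim: w => [|x w IH] //=.
move: IH; case: (runs w) => [|[|y r] rs] //= /andP[Hyr Hrs].
by case: ifP => Hxy /=; rewrite ?Hxy ?Hyr ?Hrs.
Qed.

Lemma runs_disjoint w r1 r2 z : uniq w -> r1 \in runs w -> r2 \in runs w ->
  z \in r1 -> z \in r2 -> r1 = r2.
Proof.
rewrite -{1}(runs_flatten w); elim: (runs w) => [|r R IH] //=.
rewrite cat_uniq => /and3P[_ Hd Hu]; rewrite !inE.
move=> /orP[/eqP ->|H1] /orP[/eqP ->|H2] Hz1 Hz2 //; last exact: IH.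
- by case/negP: Hd; apply/hasP; exists z => //; apply/flattenP; exists r2.
- by case/negP: Hd; apply/hasP; exists z => //; apply/flattenP; exists r1.
Qed.

Lemma path_ltn_bounds a t x : path ltn a t -> x \in a :: t -> a <= x <= last a t.
Proof.
elim: t a x => [|b t IH] a x /=; first by rewrite inE => _ /eqP ->; rewrite leqnn.
move=> /andP[Hab Hp]; rewrite inE => /orP[/eqP ->|Hx].
  have /andP[_ Hb] := IH b b Hp (mem_head _ _).
  by rewrite leqnn (leq_trans (ltnW Hab) Hb).
have /andP[H1 ->] := IH b x Hp Hx.
by rewrite (leq_trans (ltnW Hab) H1).
Qed.

Section RunEndpoints.

Variables (w r : seq nat).
Hypothesis r_run : r \in runs w.

Lemma run_path : exists a t, r = a :: t /\ path ltn a t.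
Proof.
have /allP/(_ r r_run) := runs_nonnil w; have /allP/(_ r r_run) := runs_sorted w.
by case: r => [|a t] // Hp _; exists a, t.
Qed.

Lemma run_head_le_last : head 0 r <= last 0 r.
Proof.
by have [a [t [-> Hp]]] := run_path; have /andP[] := path_ltn_bounds Hp (mem_head a t).
Qed.

Lemma run_endpoints_mem : (head 0 r \in r) && (last 0 r \in r).
Proof. by have [a [t [-> _]]] := run_path; rewrite /= mem_head mem_last. Qed.

Lemma run_straddlesE i : straddles i r = (head 0 r < i < last 0 r).
Proof.
have [a [t [-> Hp]]] := run_path; rewrite /straddles.
apply/andP/andP => [[/hasP[x Hx Hxi] /hasP[y Hy Hiy]]|[Hai Hil]].
  have /andP[H1 _] := path_ltn_bounds Hp Hx.
  have /andP[_ H2] := path_ltn_bounds Hp Hy.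
  by rewrite /=; split; lia.
by split; apply/hasP; [exists a; rewrite ?mem_head | exists (last a t); rewrite ?mem_last].
Qed.

End RunEndpoints.

Lemma lsg_add_rsg w r i : uniq w -> r \in runs w -> i \in r -> ~~ straddles i r ->
  lsg w i + rsg w i = count (straddles i) (runs w).
Proof.
move=> Hu Hr Hi Hs; rewrite /lsg /rsg /run_index.
have Hh : has (fun r => i \in r) (runs w) by apply/hasP; exists r.
set k := find _ _; have Hk : k < size (runs w) by rewrite -has_find.
have Hkr : nth [::] (runs w) k = r.
  exact: runs_disjoint Hu (mem_nth _ Hk) Hr (nth_find [::] Hh) Hi.
by rewrite -[in RHS](cat_take_drop k (runs w)) count_cat (drop_nth [::] Hk) /= Hkr (negbTE Hs).
Qed.

Lemma mem_proper_runs w r : r \in proper_runs w -> r \in runs w.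
Proof. by rewrite mem_filter => /andP[]. Qed.

Lemma count_nat_sum (T : Type) (a : pred T) s : count a s = \sum_(x <- s) a x.
Proof. by rewrite -sum1_count big_mkcond. Qed.

Lemma sum_lsg_add_rsg_endpoints w (f : seq nat -> nat) : uniq w ->
  {in proper_runs w, forall r, f r \in r /\ ~~ straddles (f r) r} ->
  let X := [seq f r | r <- proper_runs w] in
  sum_lsg w X + sum_rsg w X =
    \sum_(x <- proper_runs w) \sum_(y <- proper_runs w) straddles (f y) x.
Proof.
move=> Hu Hf X; rewrite /sum_lsg /sum_rsg -big_split /= big_map.
rewrite (eq_big_seq (fun y => \sum_(x <- runs w) straddles (f y) x)); last first.
  move=> y Hy; have [Hfy Hs] := Hf y Hy.
  by rewrite (lsg_add_rsg Hu (mem_proper_runs Hy) Hfy Hs) count_nat_sum.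
rewrite exchange_big [in RHS]/proper_runs [RHS]big_filter [RHS]big_mkcond /=.
apply: eq_big_seq => x Hx; case: ifP => // Hsize; rewrite big1 // => y _.
have [a [[|b t] [Ex _]]] := run_path Hx; last by rewrite Ex in Hsize.
by rewrite (run_straddlesE Hx) Ex /=; case: ltngtP.
Qed.

Lemma double_sum_eq_of_sym (T : eqType) (s : seq T) (F G : T -> T -> nat) :
  {in s &, forall x y, F x y + F y x = G x y + G y x} ->
  \sum_(x <- s) \sum_(y <- s) F x y = \sum_(x <- s) \sum_(y <- s) G x y.
Proof.
move=> FG.
suff : \sum_(x <- s) \sum_(y <- s) F x y + \sum_(x <- s) \sum_(y <- s) F x y =
       \sum_(x <- s) \sum_(y <- s) G x y + \sum_(x <- s) \sum_(y <- s) G x y by lia.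
rewrite [X in _ + X = _]exchange_big [X in _ = _ + X]exchange_big -!big_split /=.
apply: eq_big_seq => x Hx; rewrite -!big_split /=.
by apply: eq_big_seq => y Hy; exact: FG.
Qed.

Lemma interval_endpoints_swap a la b lb :
  a != b -> a != lb -> la != b -> la != lb -> a <= la -> b <= lb ->
  (a < b < la) + (b < a < lb) = (a < lb < la) + (b < la < lb) :> nat.
Proof.
move=> n1 n2 n3 n4 H1 H2.
by case: (ltngtP a b) n1 => // ? _; case: (ltngtP a lb) n2 => // ? _;
   case: (ltngtP la b) n3 => // ? _; case: (ltngtP la lb) n4 => // ? _ /=; lia.
Qed.

Lemma straddles_heads_lasts w x y : uniq w -> x \in runs w -> y \in runs w ->
  straddles (head 0 y) x + straddles (head 0 x) y =
  straddles (last 0 y) x + straddles (last 0 x) y :> nat.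
Proof.
move=> Hu Hx Hy; rewrite !(run_straddlesE Hx) !(run_straddlesE Hy).
have [<- | Hxy] := eqVneq x y; first by rewrite !ltnn !andbF.
have Hne u v : u \in x -> v \in y -> u != v.
  move=> Hux Hvy; apply/eqP => Euv; move/eqP: Hxy; apply.
  by apply: (runs_disjoint Hu Hx Hy Hux); rewrite Euv.
have /andP[hx lx] := run_endpoints_mem Hx; have /andP[hy ly] := run_endpoints_mem Hy.
by apply: interval_endpoints_swap; rewrite ?Hne ?(run_head_le_last Hx) ?(run_head_le_last Hy).
Qed.

Lemma word_uniq n (s : 'S_n) : uniq (word s).
Proof. by rewrite map_inj_uniq ?enum_uniq // => i j /succn_inj/val_inj/perm_inj. Qed.

Theorem mainTheorem6 (n : nat) (s : 'S_n) : 1 <= n ->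
  sum_lsg (word s) (op_set (word s)) + sum_rsg (word s) (op_set (word s)) =
  sum_lsg (word s) (clos_set (word s)) + sum_rsg (word s) (clos_set (word s)).
Proof.
move=> _; have Hu := word_uniq s.
rewrite /op_set /clos_set !sum_lsg_add_rsg_endpoints //.
- apply: double_sum_eq_of_sym => x y Hx Hy.
  exact: straddles_heads_lasts Hu (mem_proper_runs Hx) (mem_proper_runs Hy).
- move=> r /mem_proper_runs Hr; have /andP[_ ->] := run_endpoints_mem Hr.
  by rewrite (run_straddlesE Hr) ltnn andbF.
- move=> r /mem_proper_runs Hr; have /andP[-> _] := run_endpoints_mem Hr.
  by rewrite (run_straddlesE Hr) ltnn.
Qed.
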